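(* For any odd prime $p$ and any non-negative integer $k$, \[ C^{(-k-1)}_{p-2}\equiv\begin{cases}0\pmod p & \text{if } k\not\equiv 0\pmod{p-1},\\ 1\pmod p & \text{if } k\equiv 0\pmod{p-1}.\end{cases} \]
   Context: For any integer $k$, let $\mathrm{Li}_k(t)=\sum_{n=1}^{\infty} t^n/n^k$. The poly-Bernoulli numbers of type $C$, $C^{(k)}_n$ ($n\ge0$), are defined by $\frac{\mathrm{Li}_k(1-e^{-t})}{e^{t}-1}=\sum_{n=0}^{\infty}C^{(k)}_n\frac{t^n}{n!}$. For negative upper index these are integers. *)

(* Formal power series over rat, represented as nat -> rat
   (coefficient of t^n). *)
From mathcomp Require Import all_boot all_order all_algebra.
Set Implicit Arguments. Unset Strict Implicit. Unset Printing Implicit Defensive.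
Import Order.TTheory GRing.Theory Num.Theory.
Local Open Scope ring_scope.

Definition fps := nat -> rat.

Definition fmul (f g : fps) : fps :=
  fun n => \sum_(0 <= i < n.+1) f i * g (n - i)%N.

Definition fone : fps := fun n => if n == 0%N then 1 else 0.

Fixpoint fpow (f : fps) (m : nat) : fps :=
  if m is m'.+1 then fmul f (fpow f m') else fone.

Definition one_minus_expneg : fps :=
  fun n => if n == 0%N then 0 else - ((-1) ^+ n / (n`!)%:R).

Definition expm1 : fps :=
  fun n => if n == 0%N then 0 else 1 / (n`!)%:R.

(* Li_k(x) = sum_{n>=1} x^n / n^k, as formal power series in x,
   k an arbitrary integer *)
Definition Li_coef (k : int) (n : nat) : rat :=
  if n == 0%N then 0 else ((n%:R : rat) ^ k)^-1.

(* composition Li_k(u(t)) with u(0) = 0: only terms m <= N contribute to t^N *)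
Definition fcomp_Li (k : int) (u : fps) : fps :=
  fun N => \sum_(0 <= m < N.+1) Li_coef k m * fpow u m N.

(* inverse of a power series g with g 0 = 1, coefficients 0..n *)
Fixpoint inv_list (g : fps) (n : nat) : seq rat :=
  if n is n'.+1 then
    let s := inv_list g n' in
    rcons s (- \sum_(0 <= i < n) g (n - i)%N * nth 0 s i)
  else [:: 1].

Definition finv1 (g : fps) : fps := fun n => nth 0 (inv_list g n) n.

(* division f / g where f 0 = g 0 = 0 and g 1 = 1: (f/t) * (g/t)^{-1} *)
Definition fdiv_t (f g : fps) : fps :=
  fmul (fun n => f n.+1) (finv1 (fun n => g n.+1)).

Definition polyBernC_egf (k : int) : fps :=
  fdiv_t (fcomp_Li k one_minus_expneg) expm1.

Definition polyBernC (k : int) (n : nat) : rat :=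
  (n`!)%:R * polyBernC_egf k n.

From mathcomp Require Import all_boot all_order all_algebra all_fingroup.
From mathcomp Require Import all_solvable all_field ring zify.

(* Write u = 1 - e^{-t}.  Since u = (e^t - 1) e^{-t} and
   Li_{-m}(u) = sum_{r >= 1} r^m u^r, the generating function of C^{(-m)} is
   e^{-t} sum_{r >= 0} (r+1)^m u^r; expanding u^r = sum_i C(r,i) (-1)^i e^{-it}
   gives the integer formula
     C^{(-m)}_n = sum_{r <= n} (r+1)^m sum_{i <= r} C(r,i) (-1)^i (-(i+1))^n.
   For n = p - 2, Fermat's little theorem turns (-(i+1))^{p-2} into
   -1/(i+1) mod p, and C(r,i)/(i+1) = C(r+1,i+1)/(r+1) collapses the inner sum
   to -1/(r+1).  With m = k + 1 what remains is -sum_{x in F_p^*} x^k, which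
   is 1 if p - 1 divides k and 0 otherwise. *)

Set Implicit Arguments.
Unset Strict Implicit.
Unset Printing Implicit Defensive.

Import Order.TTheory GRing.Theory Num.Theory.
Local Open Scope ring_scope.

(* Truncations let [fmul] inherit the ring laws of [{poly rat}]. *)
Definition ftrunc (N : nat) (f : fps) : {poly rat} := \poly_(i < N.+1) f i.

Definition fdivX (f : fps) : fps := fun n => f n.+1.

Lemma fmul_ftrunc f g N n : (n <= N)%N ->
  fmul f g n = (ftrunc N f * ftrunc N g)`_n.
Proof.
move=> le_nN; rewrite coefM /fmul big_mkord; apply: eq_bigr => i _.
have lt_iN : (i < N.+1)%N by rewrite (leq_trans (ltn_ord i)).
have lt_niN : (n - i < N.+1)%N by rewrite ltnS (leq_trans (leq_subr _ _)).
by rewrite !coef_poly lt_iN lt_niN.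
Qed.

Lemma eq_fmull f f' g n : (forall j, (j <= n)%N -> f j = f' j) ->
  fmul f g n = fmul f' g n.
Proof.
by move=> eq_f; apply: eq_big_nat => i /andP[_ lt_in]; rewrite eq_f // -ltnS.
Qed.

Lemma eq_fmulr f g g' n : (forall j, (j <= n)%N -> g j = g' j) ->
  fmul f g n = fmul f g' n.
Proof.
by move=> eq_g; apply: eq_big_nat => i _; rewrite eq_g ?leq_subr.
Qed.

Lemma fmulC f g n : fmul f g n = fmul g f n.
Proof. by rewrite !(@fmul_ftrunc _ _ n) // mulrC. Qed.

Lemma eq_coefMl (a b c : {poly rat}) n :
  (forall j, (j <= n)%N -> a`_j = b`_j) -> (a * c)`_n = (b * c)`_n.
Proof.
by move=> eq_ab; rewrite !coefM; apply: eq_bigr => i _; rewrite eq_ab // -ltnS.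
Qed.

Lemma fmulA f g h n : fmul f (fmul g h) n = fmul (fmul f g) h n.
Proof.
have trunc_fmul u v j : (j <= n)%N ->
    (ftrunc n (fmul u v))`_j = (ftrunc n u * ftrunc n v)`_j.
  by move=> le_jn; rewrite coef_poly ltnS le_jn (fmul_ftrunc _ _ le_jn).
rewrite !(@fmul_ftrunc _ _ n) // mulrC (eq_coefMl _ (trunc_fmul g h)).
by rewrite (eq_coefMl _ (trunc_fmul f g)) mulrC mulrA.
Qed.

Lemma fmul1r g n : fmul fone g n = g n.
Proof.
rewrite /fmul big_nat_recl // /fone /= mul1r subn0 big1 ?addr0 // => i _.
by rewrite mul0r.
Qed.

Lemma fmulr1 g n : fmul g fone n = g n.
Proof. by rewrite fmulC fmul1r. Qed.

Lemma fmul_sumr I (r : seq I) (c : I -> rat) f (F : I -> fps) n :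
  fmul f (fun j => \sum_(i <- r) c i * F i j) n =
  \sum_(i <- r) c i * fmul f (F i) n.
Proof.
rewrite /fmul; under eq_bigr do rewrite mulr_sumr.
rewrite exchange_big /=; apply: eq_bigr => i _; rewrite mulr_sumr.
by apply: eq_bigr => j _; rewrite mulrCA.
Qed.

Lemma fmulBl f g h n : fmul (fun j => f j - g j) h n = fmul f h n - fmul g h n.
Proof. by rewrite /fmul -sumrB; apply: eq_bigr => i _; rewrite mulrBl. Qed.

Lemma fmul_eq0r f g n : (forall j, (j <= n)%N -> g j = 0) -> fmul f g n = 0.
Proof.
by move=> g0; rewrite (eq_fmulr _ g0) /fmul big1 // => i _; rewrite mulr0.
Qed.

Lemma fmul_divXl f g n : f 0%N = 0 -> fmul f g n.+1 = fmul (fdivX f) g n.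
Proof.
move=> f0; rewrite /fmul big_nat_recl // f0 mul0r add0r.
by apply: eq_bigr => i _; rewrite subSS.
Qed.

Lemma fpow_small f r n : f 0%N = 0 -> (n < r)%N -> fpow f r n = 0.
Proof.
move=> f0; elim: r n => [|r IHr] [|n] //= lt_nr.
  by rewrite /fmul big_nat1 f0 mul0r.
rewrite fmul_divXl //; apply: fmul_eq0r => j le_jn.
by rewrite IHr // (leq_ltn_trans le_jn).
Qed.

Lemma size_inv_list g n : size (inv_list g n) = n.+1.
Proof. by elim: n => //= n IHn; rewrite size_rcons IHn. Qed.

Lemma nth_inv_list g n i : (i <= n)%N -> nth 0 (inv_list g n) i = finv1 g i.
Proof.
elim: n => [|n IHn]; first by rewrite leqn0 => /eqP ->.
rewrite leq_eqVlt => /orP[/eqP -> // | lt_in].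
by rewrite /= nth_rcons size_inv_list lt_in IHn.
Qed.

Lemma finv1S g n :
  finv1 g n.+1 = - \sum_(0 <= i < n.+1) g (n.+1 - i)%N * finv1 g i.
Proof.
rewrite {1}/finv1 /= nth_rcons size_inv_list ltnn eqxx.
by congr (- _); apply: eq_big_nat => i /andP[_ lt_in]; rewrite nth_inv_list.
Qed.

Lemma fmul_finv1 g n : g 0%N = 1 -> fmul g (finv1 g) n = fone n.
Proof.
move=> g0; case: n => [|n]; first by rewrite /fmul big_nat1 g0 mul1r.
rewrite fmulC /fmul big_nat_recr //= subnn g0 mulr1 finv1S /fone /=.
apply/eqP; rewrite subr_eq0; apply/eqP.
by apply: eq_bigr => i _; rewrite mulrC.
Qed.

Lemma fdiv_tE f g h n : g 1%N = 1 ->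
    (forall N, f N.+1 = fmul (fdivX g) h N) -> fdiv_t f g n = h n.
Proof.
move=> g1 fE; rewrite /fdiv_t (@eq_fmull _ (fmul (fdivX g) h)) //.
rewrite (@eq_fmull _ (fmul h (fdivX g))) => [|j _]; last exact: fmulC.
by rewrite -fmulA (eq_fmulr _ (fun j _ => fmul_finv1 j g1)) fmulr1.
Qed.

Definition fexp (a : rat) : fps := fun n => a ^+ n / (n`!)%:R.

Lemma natr_fact_neq0 n : (n`!)%:R != 0 :> rat.
Proof. by rewrite pnatr_eq0 -lt0n fact_gt0. Qed.

Lemma fexp0 n : fexp 0 n = fone n.
Proof. by rewrite /fexp expr0n /fone; case: n => //= n; rewrite mul0r. Qed.

Lemma fmul_fexp a b n : fmul (fexp a) (fexp b) n = fexp (a + b) n.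
Proof.
rewrite /fexp addrC exprDn mulr_suml /fmul big_mkord; apply: eq_bigr => i _.
have le_in : (i <= n)%N by rewrite -ltnS.
have factE : (n`!)%:R = 'C(n, i)%:R * ((i`!)%:R * ((n - i)`!)%:R) :> rat.
  by rewrite -!natrM bin_fact.
have bin_neq0 : 'C(n, i)%:R != 0 :> rat by rewrite pnatr_eq0 -lt0n bin_gt0.
rewrite factE -mulr_natr; field.
by rewrite !natr_fact_neq0 bin_neq0.
Qed.

Lemma one_minus_expnegE n : one_minus_expneg n = fone n - fexp (-1) n.
Proof.
rewrite /one_minus_expneg /fexp /fone.
case: n => [|n] /=; last by rewrite sub0r.
by rewrite expr0 divr1 subrr.
Qed.

Lemma one_minus_expneg_expm1 n :
  one_minus_expneg n = fmul expm1 (fexp (-1)) n.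
Proof.
have expm1E j : expm1 j = fexp 1 j - fone j.
  rewrite /expm1 /fexp /fone.
  by case: j => [|j] /=; rewrite ?expr0 ?divr1 ?subrr ?expr1n ?subr0.
rewrite (eq_fmull _ (fun j _ => expm1E j)) fmulBl fmul_fexp fmul1r subrr fexp0.
exact: one_minus_expnegE.
Qed.

Lemma sum_sign_binS (R : pzRingType) j (x : nat -> R) :
  \sum_(i < j.+2) ('C(j.+1, i)%:R * (-1) ^+ i) * x i =
  \sum_(i < j.+1) ('C(j, i)%:R * (-1) ^+ i) * (x i - x i.+1).
Proof.
under [RHS]eq_bigr do rewrite mulrBr.
rewrite sumrB big_ord_recl.
under eq_bigr => i _ do rewrite /bump /= binS natrD !mulrDl.
rewrite big_split /= addrA; congr (_ + _).
  rewrite big_ord_recr /= (bin_small (ltnSn j)) !mul0r addr0.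
  by rewrite [RHS]big_ord_recl /= !bin0.
rewrite -sumrN; apply: eq_bigr => i _.
by rewrite exprS mulN1r mulrN mulNr.
Qed.

Lemma sum_sign_bin_tail (R : pzRingType) r :
  \sum_(i < r.+1) 'C(r.+1, i.+1)%:R * (-1) ^+ i = 1 :> R.
Proof.
have := exprD1n (-1 : R) r.+1.
rewrite addNr expr0n big_ord_recl /= expr0 bin0 mulr1n => /eqP.
rewrite eq_sym addr_eq0 => /eqP one_eq.
rewrite [RHS]one_eq -sumrN; apply: eq_bigr => i _.
by rewrite exprS mulN1r mulNrn opprK mulr_natl.
Qed.

Lemma fpow_one_minus_expneg r n : fpow one_minus_expneg r n =
  \sum_(i < r.+1) ('C(r, i)%:R * (-1) ^+ i) * fexp (- i%:R) n.
Proof.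
elim: r n => [|r IHr] n; first by rewrite big_ord1 /= oppr0 fexp0 mul1r.
rewrite /= (eq_fmulr _ (fun j _ => IHr j)).
rewrite (eq_fmull _ (fun j _ => one_minus_expnegE j)) fmulBl !fmul_sumr.
rewrite (sum_sign_binS _ (fun i => fexp (- i%:R) n)) -sumrB.
apply: eq_bigr => i _.
by rewrite fmul1r fmul_fexp -mulrBr -natr1 opprD (addrC (- i%:R)).
Qed.

Definition bernC_series (m : nat) : fps := fun n =>
  \sum_(r < n.+1) (r.+1)%:R ^+ m * fmul (fexp (-1)) (fpow one_minus_expneg r) n.

Lemma bernC_seriesE m n M : (n < M)%N -> bernC_series m n =
  \sum_(r < M) (r.+1)%:R ^+ m * fmul (fexp (-1)) (fpow one_minus_expneg r) n.
Proof.
move=> lt_nM; rewrite -(subnKC lt_nM) big_split_ord /=.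
rewrite [X in _ + X]big1 ?addr0 // => r _.
rewrite fmul_eq0r ?mulr0 // => j le_jn.
rewrite -[fmul _ _ j]/(fpow one_minus_expneg (n + r).+1 j) fpow_small //.
by rewrite ltnS (leq_trans le_jn) ?leq_addr.
Qed.

Lemma Li_coef_neg m r : Li_coef (- m%:Z) r = if r == 0%N then 0 else r%:R ^+ m.
Proof. by rewrite /Li_coef; case: eqP => // _; rewrite -exprnN invrK. Qed.

Lemma fcomp_Li_bernC_series m N :
  fcomp_Li (- m%:Z) one_minus_expneg N.+1 =
  fmul (fdivX expm1) (bernC_series m) N.
Proof.
have bernC_seriesN j : (j <= N)%N -> bernC_series m j = \sum_(r < N.+1)
    (r.+1)%:R ^+ m * fmul (fexp (-1)) (fpow one_minus_expneg r) j.
  by move=> le_jN; apply: bernC_seriesE; rewrite ltnS.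
rewrite (eq_fmulr _ bernC_seriesN) fmul_sumr.
rewrite /fcomp_Li big_nat_recl // Li_coef_neg eqxx mul0r add0r big_mkord.
apply: eq_bigr => r _; rewrite Li_coef_neg /=; congr (_ * _).
rewrite (eq_fmull _ (fun j _ => one_minus_expneg_expm1 j)) -fmulA.
by rewrite fmul_divXl.
Qed.

Lemma polyBernC_egf_neg m n : polyBernC_egf (- m%:Z) n = bernC_series m n.
Proof.
apply: fdiv_tE => [|N]; last exact: fcomp_Li_bernC_series.
by rewrite /expm1 /= divr1.
Qed.

Definition polyBernC_sum (R : pzRingType) (m n : nat) : R :=
  \sum_(r < n.+1) (r.+1)%:R ^+ m *
    \sum_(i < r.+1) ('C(r, i)%:R * (-1) ^+ i) * (- (i.+1)%:R) ^+ n.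

Lemma polyBernC_neg m n : polyBernC (- m%:Z) n = polyBernC_sum rat m n.
Proof.
rewrite /polyBernC polyBernC_egf_neg /bernC_series mulr_sumr.
apply: eq_bigr => r _; rewrite mulrCA; congr (_ * _).
rewrite (eq_fmulr _ (fun j _ => fpow_one_minus_expneg r j)) fmul_sumr mulr_sumr.
apply: eq_bigr => i _; rewrite mulrCA; congr (_ * _).
by rewrite fmul_fexp /fexp mulrC divfK ?natr_fact_neq0 // -natr1 opprD addrC.
Qed.

Lemma rmorph_polyBernC_sum (R S : pzRingType) (f : {rmorphism R -> S}) m n :
  f (polyBernC_sum R m n) = polyBernC_sum S m n.
Proof.
rewrite rmorph_sum; apply: eq_bigr => r _.
rewrite rmorphM rmorphXn rmorph_nat rmorph_sum; congr (_ * _).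
apply: eq_bigr => i _.
by rewrite !rmorphM !rmorphXn !rmorphN !rmorph_nat rmorph1.
Qed.

Section FinField.
Variable F : finFieldType.

Lemma natr_card_finField : (#|F|%:R : F) = 0.
Proof.
(* Lagrange's theorem in the additive group of [F]. *)
have := expg_cardG (in_setT (1 : F)).
by rewrite FinRing.zmodXgE FinRing.zmod1gE cardsT.
Qed.

Lemma expf_card_pred (x : F) : x != 0 -> x ^+ #|F|.-1 = 1.
Proof.
move=> x_neq0; apply: (mulfI x_neq0).
by rewrite mulr1 -exprS (ltn_predK (finNzRing_gt1 F)) expf_card.
Qed.

Lemma expf_card_subn2 (x : F) : x != 0 -> x ^+ (#|F| - 2) = x^-1.
Proof.
move=> x_neq0; apply: (mulfI x_neq0); rewrite mulfV // -exprS.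
by rewrite -subSn ?finNzRing_gt1 // subSS subn1 expf_card_pred.
Qed.

Lemma sum_expf_neq0 k :
  \sum_(x : F | x != 0) x ^+ k = if (#|F|.-1 %| k)%N then -1 else 0.
Proof.
have F_gt1 := finNzRing_gt1 F.
case: ifP => dvd_k.
  rewrite (eq_bigr (fun _ => 1)) => [|x x_neq0]; last first.
    by case/dvdnP: dvd_k => t ->; rewrite mulnC exprM expf_card_pred ?expr1n.
  apply/eqP; rewrite sumr_const cardC1 -addr_eq0 natr1.
  by rewrite (ltn_predK F_gt1) natr_card_finField.
have [z z_neq0 z_prim] : exists2 z : F, z != 0 & (#|F|.-1).-primitive_root z.
  have /hasP[z] : has (#|F|.-1).-primitive_root (enum (predC1 (0 : F))).
    apply: has_prim_root; rewrite ?enum_uniq -?cardE ?cardC1 //.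
      by rewrite ltn_predRL.
    by apply/allP => x; rewrite mem_enum unity_rootE => /expf_card_pred ->.
  by rewrite mem_enum; exists z.
have zk_neq1 : z ^+ k != 1 by rewrite -(prim_order_dvd z_prim) dvd_k.
set S := \sum_(x : F | x != 0) x ^+ k.
have S_invariant : S = z ^+ k * S.
  rewrite {1}/S (reindex_inj (mulfI z_neq0)) /= mulr_sumr.
  apply: eq_big => [x | x _]; last by rewrite exprMn.
  by rewrite mulf_eq0 (negbTE z_neq0).
apply/eqP; move/eqP: S_invariant; rewrite -subr_eq0 -{1}(mul1r S) -mulrBl.
by rewrite mulf_eq0 subr_eq0 eq_sym (negbTE zk_neq1).
Qed.

End FinField.

Section PrimeField.
Variable p : nat.
Hypothesis p_pr : prime p.

Lemma natr_Fp_neq0 i : (0 < i < p)%N -> i%:R != 0 :> 'F_p.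
Proof.
by case/andP => i_gt0 lt_ip; rewrite -(dvdn_pcharf (pchar_Fp p_pr)) gtnNdvd.
Qed.

Lemma sum_Fp_neq0 (G : 'F_p -> 'F_p) :
  \sum_(x : 'F_p | x != 0) G x = \sum_(i < p.-1) G i.+1%:R.
Proof.
have sum_Fp (H : 'F_p -> 'F_p) : \sum_(x : 'F_p) H x = \sum_(0 <= i < p) H i%:R.
  have := congr1 (fun n => \sum_(0 <= i < n) H i%:R) (Fp_cast p_pr).
  move=> /= <-; rewrite big_mkord.
  by apply: eq_bigr => x _; rewrite natr_Zp.
rewrite big_mkcond sum_Fp big_ltn ?prime_gt0 //= add0r big_add1 big_mkord.
by apply: eq_bigr => i _; rewrite natr_Fp_neq0 //= -ltn_predRL.
Qed.

Lemma sum_sign_bin_Fp r : (r.+1 < p)%N ->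
  \sum_(i < r.+1) ('C(r, i)%:R * (-1) ^+ i) * (- i.+1%:R) ^+ (p - 2) =
  - (r.+1%:R)^-1 :> 'F_p.
Proof.
move=> lt_r1p.
have natr_neq0 j : (j <= r)%N -> j.+1%:R != 0 :> 'F_p.
  by move=> le_jr; apply: natr_Fp_neq0; lia.
have binE i : (i <= r)%N ->
    'C(r, i)%:R = i.+1%:R * 'C(r.+1, i.+1)%:R / r.+1%:R :> 'F_p.
  move=> le_ir; rewrite -natrM -mul_bin_diag natrM mulrC mulKf //.
  exact: natr_neq0.
rewrite -[RHS]mulr1 -[X in _ = _ * X](sum_sign_bin_tail _ r) mulr_sumr.
apply: eq_bigr => i _; have le_ir : (i <= r)%N by rewrite -ltnS.
have expFp_subn2 (x : 'F_p) : x != 0 -> x ^+ (p - 2) = x^-1.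
  by move=> x_neq0; rewrite -(expf_card_subn2 x_neq0) card_Fp.
rewrite expFp_subn2 ?oppr_eq0 ?natr_neq0 // binE //.
by field; rewrite oppr_eq0 !nat1r !natr_neq0.
Qed.

Lemma eqz_mod_Fp (a b : int) : (a == b %[mod p])%Z = (a%:~R == b%:~R :> 'F_p).
Proof.
by rewrite eqz_mod_dvd (dvdz_pcharf (pchar_Fp p_pr)) rmorphB subr_eq0 eq_sym.
Qed.

Lemma polyBernC_sum_Fp k :
  polyBernC_sum 'F_p k.+1 (p - 2) = if (p.-1 %| k)%N then 1 else 0.
Proof.
rewrite /polyBernC_sum (_ : (p - 2).+1 = p.-1); last first.
  by rewrite -subSn ?prime_gt1 // subSS subn1.
rewrite (eq_bigr (fun r : 'I_p.-1 => - r.+1%:R ^+ k)) => [|r _]; last first.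
  have lt_r1p : (r.+1 < p)%N by rewrite -ltn_predRL.
  by rewrite sum_sign_bin_Fp // mulrN exprSr mulfK // natr_Fp_neq0 ?lt_r1p.
rewrite sumrN -(sum_Fp_neq0 (fun x => x ^+ k)) sum_expf_neq0 card_Fp //.
by case: ifP; rewrite ?opprK ?oppr0.
Qed.

End PrimeField.

Theorem theorem3p2 (p k : nat) (hp : prime p) (hodd : odd p) :
  exists c : int,
    polyBernC (- (k.+1)%:Z) (p - 2)%N = c%:~R /\
    (if (p.-1 %| k)%N then (c == 1 %[mod p%:Z])%Z else (c == 0 %[mod p%:Z])%Z).
Proof.
exists (polyBernC_sum int k.+1 (p - 2)); split.
  by rewrite polyBernC_neg (rmorph_polyBernC_sum intr).
rewrite !eqz_mod_Fp // (rmorph_polyBernC_sum intr) polyBernC_sum_Fp //.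
by case: (p.-1 %| k)%N.
Qed.
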